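(* There exists a $(364,14)$-arc in $\operatorname{PG}(2,29)$; hence $m_{14}(2,29)\ge 364$.
   Context: Points of $\operatorname{PG}(2,q)$ are the 1-dimensional subspaces of $\operatorname{GF}(q)^3$, lines are the 2-dimensional subspaces. An $(n,r)$-arc in $\operatorname{PG}(2,q)$ is a set $\mathcal B$ of $n$ points such that every line contains at most $r$ points of $\mathcal B$ and at least one line contains exactly $r$ points of $\mathcal B$. $m_r(2,q)$ is the maximum $n$ for which an $(n,r)$-arc in $\operatorname{PG}(2,q)$ exists. *)

From mathcomp Require Import all_boot all_algebra.
Set Implicit Arguments. Unset Strict Implicit. Unset Printing Implicit Defensive.
Import GRing.Theory.
Local Open Scope ring_scope.

Definition PG_point (F : fieldType) (U : {vspace 'rV[F]_3}) : bool := \dim U == 1%N.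
Definition PG_line (F : fieldType) (L : {vspace 'rV[F]_3}) : bool := \dim L == 2%N.

Definition on_line (F : fieldType) (B : seq {vspace 'rV[F]_3}) (L : {vspace 'rV[F]_3}) : nat :=
  count (fun P => (P <= L)%VS) B.

Definition is_arc (F : fieldType) (B : seq {vspace 'rV[F]_3}) (n r : nat) : Prop :=
  [/\ uniq B, all (@PG_point F) B, size B = n,
      (forall L, PG_line L -> (on_line B L <= r)%N)
    & exists2 L, PG_line L & on_line B L = r].

(* Geometry, over an arbitrary field F: let s be a duplicate-free list of
   (labels of) points with coordinate vectors in F^3, let 0 < r < size s, and
   assume that for any two distinct a, b in s at most r points c of s satisfy
   det(c, a, b) = 0.  If the coordinate vector of b were a multiple of that
   of a, all size s > r points would be collinear with a and b; so coordinate
   vectors of distinct points are independent, and every line L containing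
   two points a, b of s is their span, all points of s on L satisfy
   det(c, a, b) = 0, and L carries at most r points.  So s spans an
   (size s, r)-arc as soon as some line carries r of its points.

   Computation, over GF(29): the collinearity hypothesis is checked with
   binary integers.  For each of the 871 lines of PG(2,29), given by a
   normalised normal vector, we tabulate how many points it contains; for
   each pair of points the normalised cross product, i.e. the normal of the
   line through them, is looked up in this table.  Finally the line z = 0
   carries exactly 14 of the points. *)

From Stdlib Require Import ZArith.
From Stdlib Require FMapPositive.
From mathcomp Require Import all_boot all_algebra.
From mathcomp Require Import ring.

Set Implicit Arguments. Unset Strict Implicit. Unset Printing Implicit Defensive.
Import GRing.Theory.

Module PM := FMapPositive.PositiveMap.

(* p holds for every pair of entries of s taken in list order; this halves the
   work of checking a symmetric property of all pairs. *)
Fixpoint all_pairs (T : Type) (p : T -> T -> bool) (s : seq T) : bool :=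
  if s is a :: s' then all (p a) s' && all_pairs p s' else true.

Lemma all_pairsP (T : eqType) (p : T -> T -> bool) (s : seq T) a b :
  all_pairs p s -> a \in s -> b \in s -> a != b -> p a b || p b a.
Proof.
elim: s => [|x s IH] //= /andP[/allP px ps].
rewrite !inE => /orP[/eqP->|sa] /orP[/eqP->|sb]; first by rewrite eqxx.
- by rewrite px.
- by rewrite px ?orbT.
- exact: IH.
Qed.

Local Open Scope ring_scope.

Section Determinant.
Variable R : comPzRingType.

Definition i1 : 'I_3 := @Ordinal 3 1 isT.
Definition i2 : 'I_3 := @Ordinal 3 2 isT.

Definition det3 (c u v : 'rV[R]_3) : R :=
  c ord0 ord0 * (u ord0 i1 * v ord0 i2 - u ord0 i2 * v ord0 i1)
  - c ord0 i1 * (u ord0 ord0 * v ord0 i2 - u ord0 i2 * v ord0 ord0)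
  + c ord0 i2 * (u ord0 ord0 * v ord0 i1 - u ord0 i1 * v ord0 ord0).

Lemma det3_span x y u v : det3 (x *: u + y *: v) u v = 0.
Proof. by rewrite /det3 !mxE; ring. Qed.

Lemma det3_dep k u w : det3 w u (k *: u) = 0.
Proof. by rewrite /det3 !mxE; ring. Qed.

Lemma det3_swap c u v : det3 c v u = - det3 c u v.
Proof. by rewrite /det3; ring. Qed.

End Determinant.

Section Lines.
Variables (F : fieldType) (n : nat).

Lemma dim_span2 (u v : 'rV[F]_n) :
  u != 0 -> v \notin <[u]>%VS -> \dim (<[u]> + <[v]>)%VS = 2%N.
Proof.
move=> u0 vu; apply/eqP; rewrite eqn_leq; apply/andP; split.
  by apply: leq_trans (dimv_add_leqif _ _).1 _; rewrite !dim_vline; case: (u != 0); case: (v != 0).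
rewrite ltnNge; apply/negP => dim_le.
have span_u : (<[u]> == <[u]> + <[v]>)%VS by rewrite eqEdim addvSl dim_vline u0.
have : v \in (<[u]> + <[v]>)%VS by apply: (subvP (addvSr _ _)); apply: memv_line.
by rewrite -(eqP span_u) (negbTE vu).
Qed.

Lemma span2_eq (L : {vspace 'rV[F]_n}) u v :
  u != 0 -> v \notin <[u]>%VS -> u \in L -> v \in L -> \dim L = 2%N ->
  (<[u]> + <[v]>)%VS = L.
Proof.
move=> u0 vu uL vL dimL; apply/eqP.
by rewrite eqEdim subv_add -!memvE uL vL dim_span2 ?dimL.
Qed.

End Lines.

Section ArcFromCollinearity.
Variables (F : fieldType) (T : eqType) (coords : T -> 'rV[F]_3).
Variables (s : seq T) (r : nat).

Definition collinear (a b c : T) : bool := det3 (coords c) (coords a) (coords b) == 0.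

Hypothesis s_uniq : uniq s.
Hypothesis r_gt0 : (0 < r)%N.
Hypothesis r_lt_size : (r < size s)%N.
Hypothesis collinear_bound : forall a b, a \in s -> b \in s -> a != b ->
  (count (collinear a b) s <= r)%N.

Definition arc_points : seq {vspace 'rV[F]_3} := map (fun t => <[coords t]>%VS) s.

(* Were coords b proportional to coords a, all of s would be collinear with them. *)
Lemma coords_indep a b : a \in s -> b \in s -> a != b -> coords b \notin <[coords a]>%VS.
Proof.
move=> sa sb ab; apply/negP => /vlineP[k coords_b].
have := collinear_bound sa sb ab; apply/negP; rewrite -ltnNge.
rewrite (@eq_count _ _ predT) ?count_predT // => c.
by rewrite /collinear coords_b det3_dep eqxx.
Qed.

Lemma coords_neq0 a : a \in s -> coords a != 0.
Proof.
move=> sa; have [b sb ba] : exists2 b, b \in s & b != a.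
  apply/hasP; rewrite has_count.
  have := count_predC (pred1 a) s; rewrite count_uniq_mem // sa add1n => size_s.
  by rewrite -ltnS size_s (leq_ltn_trans r_gt0 r_lt_size).
apply/negP => /eqP coords_a.
by have := coords_indep sb sa ba; rewrite coords_a mem0v.
Qed.

Lemma arc_points_uniq : uniq arc_points.
Proof.
rewrite map_inj_in_uniq // => a b sa sb coords_ab; apply/eqP/negPn/negP => ab.
by have := coords_indep sa sb ab; rewrite coords_ab memv_line.
Qed.

Lemma arc_points_are_points : all (@PG_point F) arc_points.
Proof. by apply/allP => P /mapP[t st ->]; rewrite /PG_point dim_vline coords_neq0. Qed.

(* A line through two points a, b of s is their span, so its points of s
   are collinear with a and b. *)
Lemma on_line_le L : PG_line L -> (on_line arc_points L <= r)%N.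
Proof.
move=> /eqP dimL; rewrite /on_line count_map.
rewrite (@eq_count _ _ (fun t => coords t \in L)); last by move=> t; rewrite /= memvE.
case on_L: [seq t <- s | coords t \in L] => [|a [|b others]];
  [by rewrite -size_filter on_L.. |].
have : uniq [seq t <- s | coords t \in L] by rewrite filter_uniq.
rewrite on_L /= inE => /andP[/norP[ab _] _].
have : a \in [seq t <- s | coords t \in L] by rewrite on_L mem_head.
rewrite mem_filter => /andP[aL sa].
have : b \in [seq t <- s | coords t \in L] by rewrite on_L !inE eqxx orbT.
rewrite mem_filter => /andP[bL sb].
apply: leq_trans (collinear_bound sa sb ab).
rewrite -(span2_eq (coords_neq0 sa) (coords_indep sa sb ab) aL bL dimL).
apply: sub_count => c /memv_addP[_ /vlineP[x ->] [_ /vlineP[y ->] coords_c]].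
by rewrite /collinear coords_c det3_span.
Qed.

Lemma is_arc_of_collinear_bound :
  (exists2 L, PG_line L & (r <= on_line arc_points L)%N) ->
  is_arc arc_points (size s) r.
Proof.
move=> [L lineL rich]; split.
- exact: arc_points_uniq.
- exact: arc_points_are_points.
- by rewrite size_map.
- exact: on_line_le.
- by exists L => //; apply/eqP; rewrite eqn_leq rich on_line_le.
Qed.

End ArcFromCollinearity.


Definition point := (nat * nat * nat)%type.
Definition arc364 : seq point := [:: (0,1,5); (0,1,7); (0,1,17); (0,1,21); (0,1,23); (0,1,0); (0,1,2); (0,1,6); (0,1,8); (0,1,10); (0,1,14); (0,1,24); (0,1,26); (1,1,9); (1,1,19); (1,1,25); (1,1,27); (1,1,4); (1,1,8); (1,1,10); (1,1,12); (1,1,26); (1,1,28); (1,2,6); (1,2,14); (1,2,18); (1,2,20); (1,2,22); (1,2,24); (1,2,1); (1,2,5); (1,2,11); (1,2,13); (1,2,15); (1,2,17); (1,2,21); (1,2,0); (1,3,5); (1,3,9); (1,3,11); (1,3,13); (1,3,15); (1,3,21); (1,3,25); (1,3,2); (1,3,6); (1,3,8); (1,3,12); (1,3,20); (1,4,6); (1,4,10); (1,4,12); (1,4,14); (1,4,18); (1,4,20); (1,4,24); (1,4,26); (1,4,28); (1,4,3); (1,4,15); (1,4,23); (1,4,25); (1,5,11); (1,5,13); (1,5,21); (1,5,23); (1,5,4); (1,5,8); (1,5,10); (1,5,12); (1,5,18); (1,5,24); (1,5,26); (1,6,10); (1,6,20); (1,6,22); (1,6,3); (1,6,9); (1,6,11);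 (1,6,15); (1,6,17); (1,6,21); (1,6,23); (1,6,25); (1,6,0); (1,7,15); (1,7,19); (1,7,21); (1,7,23); (1,7,27); (1,7,0); (1,7,4); (1,7,6); (1,7,12); (1,7,22); (1,7,24); (1,7,3); (1,7,5); (1,8,12); (1,8,16); (1,8,18); (1,8,22); (1,8,28); (1,8,3); (1,8,9); (1,8,11); (1,8,13); (1,8,15); (1,8,19); (1,8,27); (1,9,11); (1,9,13); (1,9,15); (1,9,19); (1,9,2); (1,9,10); (1,9,12); (1,9,22); (1,9,26); (1,9,1); (1,9,7); (1,10,14); (1,10,18); (1,10,26); (1,10,28); (1,10,1); (1,10,5); (1,10,13); (1,10,19); (1,10,27); (1,10,2); (1,10,6); (1,10,8); (1,11,13); (1,11,15); (1,11,17); (1,11,19); (1,11,25); (1,11,0); (1,11,6); (1,11,8); (1,11,10); (1,11,12); (1,11,16); (1,11,24); (1,11,1); (1,11,9); (1,12,14); (1,12,20); (1,12,28); (1,12,3); (1,12,5); (1,12,7); (1,12,9); (1,12,15); (1,12,19); (1,12,25); (1,12,27); (1,12,0); (1,12,2); (1,12,6); (1,13,15); (1,13,25); (1,13,27); (1,13,6); (1,13,8); (1,13,18); (1,13,22); (1,13,24); (1,13,26); (1,13,1); (1,13,3); (1,13,7); (1,14,20); (1,14,22); (1,14,24); (1,14,28); (1,14,7); (1,14,13); (1,14,21); (1,14,25); (1,14,27); (1,14,0); (1,14,2); (1,14,8); (1,14,12); (1,15,17); (1,15,21); (1,15,27); (1,15,0); (1,15,2); (1,15,4); (1,15,8); (1,15,22);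 (1,15,1); (1,15,5); (1,15,7); (1,15,9); (1,15,11); (1,16,18); (1,16,20); (1,16,22); (1,16,26); (1,16,28); (1,16,3); (1,16,5); (1,16,7); (1,16,11); (1,16,21); (1,16,23); (1,16,2); (1,16,4); (1,16,14); (1,17,23); (1,17,27); (1,17,0); (1,17,2); (1,17,4); (1,17,10); (1,17,20); (1,17,22); (1,17,24); (1,17,26); (1,17,1); (1,17,9); (1,17,15); (1,18,20); (1,18,28); (1,18,5); (1,18,13); (1,18,17); (1,18,19); (1,18,21); (1,18,23); (1,18,0); (1,18,4); (1,18,10); (1,18,12); (1,18,14); (1,18,16); (1,19,23); (1,19,25); (1,19,27); (1,19,2); (1,19,10); (1,19,16); (1,19,24); (1,19,28); (1,19,1); (1,19,3); (1,19,5); (1,19,11); (1,19,15); (1,20,22); (1,20,24); (1,20,28); (1,20,1); (1,20,3); (1,20,7); (1,20,17); (1,20,19); (1,20,27); (1,20,0); (1,20,16); (1,20,18); (1,21,25); (1,21,2); (1,21,10); (1,21,14); (1,21,16); (1,21,18); (1,21,20); (1,21,26); (1,21,1); (1,21,7); (1,21,9); (1,21,11); (1,21,13); (1,21,17); (1,22,24); (1,22,26); (1,22,5); (1,22,7); (1,22,21); (1,22,25); (1,22,0); (1,22,2); (1,22,8); (1,22,10); (1,22,14); (1,23,0); (1,23,4); (1,23,8); (1,23,12); (1,23,14); (1,23,18); (1,23,20); (1,23,22); (1,23,26); (1,23,7); (1,23,9); (1,23,17); (1,23,19); (1,24,28); (1,24,3); (1,24,5); (1,24,7); (1,24,11); (1,24,13);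 (1,24,19); (1,24,21); (1,24,6); (1,24,8); (1,24,16); (1,24,18); (1,25,4); (1,25,6); (1,25,14); (1,25,16); (1,25,1); (1,25,3); (1,25,5); (1,25,9); (1,25,11); (1,25,15); (1,25,17); (1,25,19); (1,26,3); (1,26,9); (1,26,17); (1,26,21); (1,26,25); (1,26,4); (1,26,8); (1,26,14); (1,26,16); (1,26,18); (1,26,24); (1,27,0); (1,27,8); (1,27,12); (1,27,14); (1,27,16); (1,27,18); (1,27,24); (1,27,5); (1,27,7); (1,27,9); (1,27,11); (1,27,23); (1,28,1); (1,28,3); (1,28,13); (1,28,17); (1,28,19); (1,28,21); (1,28,25); (1,28,27); (1,28,2); (1,28,4); (1,28,6); (1,28,10); (1,28,20); (1,28,22)].

Lemma size_arc364 : size arc364 = 364%N.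
Proof. by []. Qed.

Lemma arc364_uniq : uniq arc364.
Proof. by vm_compute. Qed.

Definition ptvec (R : pzSemiRingType) (t : point) : 'rV[R]_3 :=
  \row_(k < 3) (nth 0%N [:: t.1.1; t.1.2; t.2] k)%:R.

(* The determinant of three triples is the difference of two natural numbers. *)
Definition det_pos (c a b : point) : nat :=
  (c.1.1 * a.1.2 * b.2 + c.1.2 * a.2 * b.1.1 + c.2 * a.1.1 * b.1.2)%N.
Definition det_neg (c a b : point) : nat :=
  (c.1.1 * a.2 * b.1.2 + c.1.2 * a.1.1 * b.2 + c.2 * a.1.2 * b.1.1)%N.

Lemma det3_ptvec (R : comPzRingType) c a b :
  det3 (ptvec R c) (ptvec R a) (ptvec R b) = (det_pos c a b)%:R - (det_neg c a b)%:R.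
Proof. by rewrite /det3 !mxE /= /det_pos /det_neg !natrD !natrM; ring. Qed.

Lemma collinear_mod29 a b c :
  collinear (@ptvec 'F_29) a b c -> det_pos c a b = det_neg c a b %[mod 29].
Proof.
rewrite /collinear det3_ptvec subr_eq0 => /eqP/(congr1 val).
by rewrite /= !val_Fp_nat.
Qed.

Definition line_z0 (F : fieldType) : {vspace 'rV[F]_3} :=
  (<[ptvec F (1, 0, 0)%N]> + <[ptvec F (0, 1, 0)%N]>)%VS.

Lemma line_z0_line (F : fieldType) : PG_line (line_z0 F).
Proof.
apply/eqP/dim_span2.
  by apply/eqP => /rowP/(_ ord0); rewrite !mxE /= => /eqP; rewrite oner_eq0.
apply/vlineP => -[k /rowP/(_ i1)]; rewrite !mxE /= mulr0 => /eqP.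
by rewrite oner_eq0.
Qed.

Lemma ptvec_z0 (F : fieldType) x y : ptvec F (x, y, 0)%N \in line_z0 F.
Proof.
have -> : ptvec F (x, y, 0)%N = x%:R *: ptvec F (1, 0, 0)%N + y%:R *: ptvec F (0, 1, 0)%N.
  by apply/rowP => -[[|[|[|k]]] ?]; rewrite !mxE /= ?mulr1 ?mulr0 ?addr0 ?add0r.
by rewrite memv_add ?memvZ ?memv_line.
Qed.

Section Certificate.
Local Open Scope Z_scope.

(* Triples of binary integers; their arithmetic is evaluated efficiently. *)
Definition vecZ := (Z * Z * Z)%type.

Definition toZ (t : point) : vecZ := (Z.of_nat t.1.1, Z.of_nat t.1.2, Z.of_nat t.2).

Definition cross (u v : vecZ) : vecZ :=
  let '(u0, u1, u2) := u in let '(v0, v1, v2) := v in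
  (u1 * v2 - u2 * v1, u2 * v0 - u0 * v2, u0 * v1 - u1 * v0).

Definition dot (u v : vecZ) : Z :=
  let '(u0, u1, u2) := u in let '(v0, v1, v2) := v in u0 * v0 + u1 * v1 + u2 * v2.

Definition incident (c n : vecZ) : bool := dot c n mod 29 =? 0.

Definition scale (k : Z) (n : vecZ) : vecZ :=
  let '(n0, n1, n2) := n in ((k * n0) mod 29, (k * n1) mod 29, (k * n2) mod 29).

Lemma incident_scale c n k : incident c n -> incident c (scale k n).
Proof.
case: c n => [[c0 c1] c2] [[n0 n1] n2]; rewrite /incident /= => /Z.eqb_eq dot0.
apply/Z.eqb_eq.
rewrite (Z.mod_eq (k * n0)) // (Z.mod_eq (k * n1)) // (Z.mod_eq (k * n2)) //.
set q0 := _ / 29; set q1 := _ / 29; set q2 := _ / 29.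
have -> : c0 * (k * n0 - 29 * q0) + c1 * (k * n1 - 29 * q1) + c2 * (k * n2 - 29 * q2)
  = k * (c0 * n0 + c1 * n1 + c2 * n2) + (- (c0 * q0 + c1 * q1 + c2 * q2)) * 29 by ring.
by rewrite Z_mod_plus_full -Z.mul_mod_idemp_r // dot0 Z.mul_0_r.
Qed.

(* Normalisation: scale by the inverse (x^27, by Fermat) of the first
   nonzero coordinate. *)
Definition inv29 (x : Z) : Z :=
  let sq y := y * y mod 29 in
  let x2 := sq x in let x8 := sq (sq x2) in x * x2 * x8 * sq x8 mod 29.

Definition leading (n : vecZ) : Z :=
  let '(n0, n1, n2) := n in
  let r0 := n0 mod 29 in let r1 := n1 mod 29 in
  if r0 =? 0 then (if r1 =? 0 then n2 mod 29 else r1) else r0.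

Definition normalize (n : vecZ) : vecZ := scale (inv29 (leading n)) n.

Definition lines29 : seq vecZ :=
  (0, 0, 1) :: [seq (0, 1, Z.of_nat z) | z <- iota 0 29] ++
  [seq (1, Z.of_nat y, Z.of_nat z) | y <- iota 0 29, z <- iota 0 29].

(* Normalised normals have coordinates in {0,...,28}, so key is injective on them;
   the lookup nevertheless compares the stored normal with eqb3. *)
Definition key (n : vecZ) : positive :=
  let '(n0, n1, n2) := n in Z.to_pos (1 + n0 * 841 + n1 * 29 + n2).

Definition eqb3 (u v : vecZ) : bool :=
  let '(u0, u1, u2) := u in let '(v0, v1, v2) := v in
  (u0 =? v0) && (u1 =? v1) && (u2 =? v2).

Lemma eqb3_eq u v : eqb3 u v -> u = v.
Proof.
case: u v => [[u0 u1] u2] [[v0 v1] v2] /=.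
by move=> /andP[/andP[/Z.eqb_eq -> /Z.eqb_eq ->] /Z.eqb_eq ->].
Qed.

Definition line_table (s : seq vecZ) : PM.t (vecZ * nat) :=
  foldr (fun n t => PM.add (key n) (n, count (incident^~ n) s) t) (PM.empty _) lines29.

Lemma line_table_count s k n v :
  PM.find k (line_table s) = Some (n, v) -> v = count (incident^~ n) s.
Proof.
rewrite /line_table; elim: lines29 => [|m ns IH] /=; first by rewrite PM.gempty.
case: (Pos.eq_dec k (key m)) => [->|k_m]; first by rewrite PM.gss => -[<- <-].
by rewrite PM.gso //; apply: IH.
Qed.

Definition pair_ok (r : nat) (tbl : PM.t (vecZ * nat)) (a b : point) : bool :=
  let n := normalize (cross (toZ a) (toZ b)) in
  if PM.find (key n) tbl is Some (n', v) then eqb3 n' n && (v <= r)%N else false.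

Lemma pair_ok_count r s a b : pair_ok r (line_table (map toZ s)) a b ->
  (count (fun c => incident (toZ c) (cross (toZ a) (toZ b))) s <= r)%N.
Proof.
rewrite /pair_ok; case found: PM.find => [[n' v]|] // /andP[/eqb3_eq n'_eq v_le].
move: v_le; rewrite (line_table_count found) count_map; apply: leq_trans.
by apply: sub_count => c on_c; rewrite /= n'_eq; apply: incident_scale.
Qed.

Lemma dot_cross_toZ c a b :
  dot (toZ c) (cross (toZ a) (toZ b)) = Z.of_nat (det_pos c a b) - Z.of_nat (det_neg c a b).
Proof. by rewrite /det_pos /det_neg !Nat2Z.inj_add !Nat2Z.inj_mul /=; ring. Qed.

Lemma Z_of_nat_mod29 x : Z.of_nat x mod 29 = Z.of_nat (x %% 29)%N mod 29.
Proof.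
by rewrite {1}(divn_eq x 29) Nat2Z.inj_add Nat2Z.inj_mul Z.add_comm Z_mod_plus_full.
Qed.

Lemma incident_of_mod29 c a b : det_pos c a b = det_neg c a b %[mod 29] ->
  incident (toZ c) (cross (toZ a) (toZ b)).
Proof.
move=> congr; apply/Z.eqb_eq.
rewrite dot_cross_toZ Zminus_mod.
by rewrite (Z_of_nat_mod29 (det_pos c a b)) (Z_of_nat_mod29 (det_neg c a b)) congr Z.sub_diag.
Qed.

End Certificate.

Lemma arc364_certificate : all_pairs (pair_ok 14 (line_table (map toZ arc364))) arc364.
Proof. by vm_cast_no_check (erefl true). Qed.

Lemma arc364_collinear_bound a b : a \in arc364 -> b \in arc364 -> a != b ->
  (count (collinear (@ptvec 'F_29) a b) arc364 <= 14)%N.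
Proof.
move=> arc_a arc_b ab.
have /orP[ok_ab|ok_ba] := all_pairsP arc364_certificate arc_a arc_b ab.
  apply: leq_trans (pair_ok_count ok_ab).
  by apply: sub_count => c /collinear_mod29/incident_of_mod29.
apply: leq_trans (pair_ok_count ok_ba).
apply: sub_count => c col_abc; apply/incident_of_mod29/collinear_mod29.
by rewrite /collinear det3_swap oppr_eq0.
Qed.

Lemma line_z0_rich : (14 <= on_line (arc_points (@ptvec 'F_29) arc364) (line_z0 'F_29))%N.
Proof.
have count_z0 : count (fun t : point => t.2 == 0%N) arc364 = 14%N by vm_compute.
rewrite /on_line count_map -count_z0.
apply: sub_count => -[[x y] z] /= /eqP ->.
by rewrite -memvE ptvec_z0.
Qed.

Theorem mainTheorem14 :
  (exists B : seq {vspace 'rV['F_29]_3}, is_arc B 364 14) /\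
  (forall N : nat,
     (forall (B : seq {vspace 'rV['F_29]_3}) (n : nat), is_arc B n 14 -> (n <= N)%N) ->
     (364 <= N)%N).
Proof.
have arc : is_arc (arc_points (@ptvec 'F_29) arc364) 364 14.
  rewrite -size_arc364; apply: is_arc_of_collinear_bound.
  - exact: arc364_uniq.
  - by [].
  - by rewrite size_arc364.
  - exact: arc364_collinear_bound.
  - by exists (line_z0 'F_29); [exact: line_z0_line | exact: line_z0_rich].
split; first by exists (arc_points (@ptvec 'F_29) arc364).
by move=> N maxN; exact: maxN _ _ arc.
Qed.
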